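(* Let $k$ be sufficiently large and $m/n\ge195\cdot2^k\ln^2k/k$. Let $\mathcal M$ be any outcome of the greedy mist construction applied to $\Phi=\Phi_k(n,m)$. Then with probability $1-\exp(-\Omega(n))$, $$|\mathcal D(\Phi,\mathcal M)|\le2^n\exp(-2n/k^2).$$
   Context: $\Phi=\Phi_k(n,m)$ is a uniformly random $k$-CNF with $m$ clauses over $x_1,\dots,x_n$. $\rho=2^{-k}m/n$, $\kappa=\ln k/k$. $\mathcal U_\Phi(\sigma)$ is the number of clauses unsatisfied by $\sigma$, $T(\Phi)=\{\tau:\mathcal U_\Phi(\tau)\le n\rho/10\}$. $\mathrm{dist}$ is Hamming distance and $\mathcal D_\sigma(r_1,r_2)=\{\tau\in\{0,1\}^n:\lfloor r_1\kappa n\rfloor\le\mathrm{dist}(\sigma,\tau)\le\lfloor r_2\kappa n\rfloor\}$. Greedy mist construction: start with $\mathcal M=\emptyset$; while $T(\Phi)\setminus\bigcup_{\mu\in\mathcal M}\mathcal D_\mu(0,2)\ne\emptyset$, add an arbitrary element of this set to $\mathcal M$. $\mathcal D(\Phi,\mathcal M)=\bigcup_{\sigma\in\mathcal M}\mathcal D_\sigma(0,10)$. *)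

From HB Require Import structures.
From Stdlib Require Import Reals Classical ClassicalEpsilon.
From mathcomp Require Import all_boot.

Set Implicit Arguments.
Unset Strict Implicit.
Unset Printing Implicit Defensive.

Definition assignment (n : nat) := {ffun 'I_n -> bool}.
(* A literal is (variable index, polarity); (i,true) = x_i, (i,false) = ~x_i.
   A k-clause is an ordered k-tuple of literals; Phi_k(n,m) is uniform over
   the (2n)^(k m) sequences of m such clauses. *)
Definition literal (n : nat) := ('I_n * bool)%type.
Definition clause (n k : nat) := {ffun 'I_k -> literal n}.
Definition formula (n k m : nat) := {ffun 'I_m -> clause n k}.

Definition lit_true (n : nat) (s : assignment n) (l : literal n) : bool :=
  s l.1 == l.2.
Definition clause_sat (n k : nat) (s : assignment n) (c : clause n k) : bool :=
  [exists j : 'I_k, lit_true s (c j)].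

Definition num_unsat (n k m : nat) (Phi : formula n k m) (s : assignment n) : nat :=
  #|[set j : 'I_m | ~~ clause_sat s (Phi j)]|.

Definition pbool (P : Prop) : bool :=
  if excluded_middle_informative P then true else false.

Local Open Scope R_scope.

Definition kappa (k : nat) : R := ln (INR k) / INR k.
Definition rho (n k m : nat) : R := INR m / (2 ^ k * INR n).

Definition inT (n k m : nat) (Phi : formula n k m) (t : assignment n) : Prop :=
  INR (num_unsat Phi t) <= INR n * rho n k m / 10.

Definition hdist (n : nat) (s t : assignment n) : nat :=
  #|[set i : 'I_n | s i != t i]|.

Definition inD (n k : nat) (s : assignment n) (r1 r2 : R) (t : assignment n) : Prop :=
  IZR (Int_part (r1 * kappa k * INR n)) <= INR (hdist s t) <=
  IZR (Int_part (r2 * kappa k * INR n)).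

Definition asg0 (n : nat) : assignment n := [ffun _ => false].

(* M = [:: mu_0; ...; mu_{t-1}] is a possible outcome of the greedy mist
   construction: each mu_i lies in T(Phi) minus the union of D_{mu_j}(0,2), j<i,
   and the loop stops, i.e. T(Phi) is covered by the union of D_mu(0,2). *)
Definition greedy_mist (n k m : nat) (Phi : formula n k m) (M : seq (assignment n)) : Prop :=
  (forall i : nat, (i < size M)%N ->
     inT Phi (nth (asg0 n) M i) /\
     (forall j : nat, (j < i)%N -> ~ inD k (nth (asg0 n) M j) 0 2 (nth (asg0 n) M i))) /\
  (forall t : assignment n, inT Phi t -> exists mu, mu \in M /\ inD k mu 0 2 t).

Definition mist_region_card (n k m : nat) (Phi : formula n k m) (M : seq (assignment n)) : nat :=
  #|[set t : assignment n | pbool (exists mu, mu \in M /\ inD k mu 0 10 t)]|.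

Definition bad_event (n k m : nat) (Phi : formula n k m) : Prop :=
  exists M, greedy_mist Phi M /\
    INR (mist_region_card Phi M) > 2 ^ n * exp (- 2 * INR n / (INR k) ^ 2).

Definition prob (n k m : nat) (P : formula n k m -> Prop) : R :=
  INR #|[set Phi : formula n k m | pbool (P Phi)]| / INR #|{: formula n k m}|.

From HB Require Import structures.
From Stdlib Require Import Reals Classical ClassicalEpsilon Lra.
From mathcomp Require Import all_boot.

Set Implicit Arguments.
Unset Strict Implicit.
Unset Printing Implicit Defensive.

(* A first-moment argument.
   Every centre lies in T(Phi), so D(Phi, M) is covered by the Hamming balls of
   radius r = floor(10 kappa n) around the points of T(Phi), each of size at most
   (k+1)^n / k^(n-r) <= exp(n/k + r ln k).  For a fixed sigma, weighting formulas
   by 2^(number of clauses satisfied by sigma) gives the exponential Markov bound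
   P(sigma in T(Phi)) <= exp(-(m/2^k)(1/2 - ln 2/10)), as a uniform clause is
   satisfied with probability 1 - 2^-k.  Markov's inequality for |T(Phi)| then
   bounds the probability that |D(Phi, M)| > 2^n exp(-2n/k^2) by exp(-n/k) as soon
   as m/n >= 195 2^k ln^2 k / k. *)

Section Counting.
Local Open Scope nat_scope.

Lemma prod_nat_bool (I : finType) (b : pred I) : \prod_i (b i : nat) = [forall i, b i].
Proof.
have andb_morph : {morph nat_of_bool : x y / x && y >-> x * y} by move=> x y; rewrite mulnb.
by rewrite -(big_morph nat_of_bool andb_morph (erefl : nat_of_bool true = 1)) big_andE.
Qed.

Lemma sum_nat_bool (T : finType) (P : pred T) : \sum_x (P x : nat) = #|[set x | P x]|.
Proof. by rewrite -sum1_card [RHS]big_mkcond; apply: eq_bigr => x _; rewrite inE; case: (P x). Qed.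

Lemma expn_card_set (T : finType) (a : nat) (P : pred T) :
  a ^ #|[set x | P x]| = \prod_x a ^ P x.
Proof. by rewrite -sum_nat_bool expn_sum. Qed.

Lemma subn_card_setC (T : finType) (P : pred T) :
  #|T| - #|[set x | ~~ P x]| = #|[set x | P x]|.
Proof.
have -> : [set x | ~~ P x] = ~: [set x | P x] by apply/setP => x; rewrite !inE.
by rewrite -(cardsC [set x | P x]) addnK.
Qed.

Lemma card_bigcup_le (I T : finType) (A : pred I) (F : I -> {set T}) :
  #|\bigcup_(i in A) F i| <= \sum_(i in A) #|F i|.
Proof.
apply: (big_ind2 (fun (X : {set T}) y => #|X| <= y)) => //; first by rewrite cards0.
by move=> X1 n1 X2 n2 h1 h2; apply: leq_trans (leq_card_setU X1 X2).1 (leq_add h1 h2).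
Qed.

Lemma sum_card_set_swap (T U : finType) (R : T -> U -> bool) :
  \sum_x #|[set y | R x y]| = \sum_y #|[set x | R x y]|.
Proof.
under eq_bigr do rewrite -sum_nat_bool.
by rewrite exchange_big; apply: eq_bigr => y _; rewrite sum_nat_bool.
Qed.

Variables (n k m : nat).

Lemma card_clause : #|{: clause n k}| = (n * 2) ^ k.
Proof. by rewrite card_ffun card_prod !card_ord card_bool. Qed.

Lemma sum_clause_unsat (s : assignment n) :
  \sum_(c : clause n k) (~~ clause_sat s c : nat) = n ^ k.
Proof.
under eq_bigr => c _ do rewrite /clause_sat negb_exists -prod_nat_bool.
rewrite -(bigA_distr_bigA (fun _ l => (~~ lit_true s l : nat))) /=.
rewrite (eq_bigr (fun _ => n)) ?prod_nat_const ?card_ord // => j _.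
rewrite -(pair_big xpredT xpredT (fun i b => (~~ lit_true s (i, b) : nat))) /=.
rewrite -[RHS]card_ord -sum1_card; apply: eq_bigr => i _.
by rewrite big_bool /lit_true /=; case: (s i).
Qed.

Lemma sum_clause_weight (s : assignment n) :
  \sum_(c : clause n k) 2 ^ clause_sat s c + n ^ k = 2 * (n * 2) ^ k.
Proof.
rewrite -(sum_clause_unsat s) -big_split /= mulnC -card_clause -sum1_card big_distrl /=.
by apply: eq_bigr => c _; case: (clause_sat s c).
Qed.

Lemma sum_formula_weight (s : assignment n) :
  \sum_(Phi : formula n k m) 2 ^ (m - num_unsat Phi s) =
  (\sum_(c : clause n k) 2 ^ clause_sat s c) ^ m.
Proof.
under eq_bigr => Phi _ do
  rewrite /num_unsat -[m in m - _]card_ord subn_card_setC expn_card_set.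
by rewrite -(bigA_distr_bigA (fun _ c => 2 ^ clause_sat s c)) prod_nat_const card_ord.
Qed.

Lemma sum_hamming_weight (s : assignment n) :
  \sum_(t : assignment n) k ^ (n - hdist s t) = (k + 1) ^ n.
Proof.
under eq_bigr => t _ do
  rewrite /hdist -[n in n - _]card_ord subn_card_setC expn_card_set.
rewrite -(bigA_distr_bigA (fun i b => k ^ (s i == b))) /=.
rewrite (eq_bigr (fun _ => k + 1)) ?prod_nat_const ?card_ord // => i _.
by rewrite big_bool /=; case: (s i); rewrite /= expn1 // addnC.
Qed.

End Counting.

Local Open Scope R_scope.

Lemma exp_le_exp x y : x <= y -> exp x <= exp y.
Proof. by case/Rle_lt_or_eq_dec => [/exp_increasing/Rlt_le | ->] //; apply: Rle_refl. Qed.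

Lemma ln_le_ln x y : 0 < x -> x <= y -> ln x <= ln y.
Proof.
move=> x_gt0; case/Rle_lt_or_eq_dec => [/(ln_increasing _ _ x_gt0)/Rlt_le | ->] //.
exact: Rle_refl.
Qed.

Lemma ln_add1_le x : 0 < x -> ln (x + 1) <= ln x + / x.
Proof.
move=> x_gt0; have ix_gt0 := Rinv_0_lt_compat _ x_gt0.
have -> : x + 1 = x * (1 + / x) by field; lra.
rewrite ln_mult; [|lra|lra]; apply: Rplus_le_compat_l.
have := @ln_le_ln (1 + / x) (exp (/ x)) ltac:(lra) (exp_ineq1_le _).
by rewrite ln_exp.
Qed.

Lemma exp_pow x (d : nat) : exp x ^ d = exp (INR d * x).
Proof. by rewrite -Rpower_pow; [rewrite /Rpower ln_exp | apply: exp_pos]. Qed.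

Lemma INR_expn a d : INR (a ^ d)%N = INR a ^ d.
Proof. by elim: d => [|d IH]; rewrite ?expnS ?mult_INR ?IH. Qed.

Lemma INR_expn_exp a d : (0 < a)%N -> INR (a ^ d)%N = exp (INR d * ln (INR a)).
Proof. by move=> a_gt0; rewrite INR_expn -Rpower_pow //; apply: lt_0_INR; apply/ltP. Qed.

Lemma pboolP (P : Prop) : pbool P <-> P.
Proof. by rewrite /pbool; case: excluded_middle_informative. Qed.

Lemma markov_card (T : finType) (A : {pred T}) (f : T -> nat) (Z : R) :
  (forall x, x \in A -> Z <= INR (f x)) -> INR #|A| * Z <= INR (\sum_x f x).
Proof.
move=> fA_ge; apply: Rle_trans (_ : INR (\sum_(x in A) f x) <= _); last first.
  by apply: le_INR; apply/leP; rewrite [X in (_ <= X)%N](bigID (mem A)) /= leq_addr.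
rewrite -sum1_card; elim/big_rec2: _ => [|x n s Ax IH]; first by rewrite /=; lra.
by rewrite !plus_INR; have := fA_ge x Ax; rewrite /=; lra.
Qed.

Lemma sum_le_card_mul (T : finType) (A : {pred T}) (f : T -> nat) (Z : R) :
  (forall x, x \in A -> INR (f x) <= Z) -> INR (\sum_(x in A) f x) <= INR #|A| * Z.
Proof.
move=> fA_le; rewrite -sum1_card; elim/big_rec2: _ => [|x n s Ax IH]; first by rewrite /=; lra.
by rewrite !plus_INR; have := fA_le x Ax; rewrite /=; lra.
Qed.

Definition hball (n : nat) (s : assignment n) (r : R) : {set assignment n} :=
  [set t | pbool (INR (hdist s t) <= r)].

Lemma card_hball_le (n k : nat) (s : assignment n) (r : R) : (0 < k)%N ->
  INR #|hball s r| <= exp (INR n / INR k + r * ln (INR k)).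
Proof.
move=> k_gt0; have k_pos : 0 < INR k by apply: lt_0_INR; apply/ltP.
have lnk_ge0 : 0 <= ln (INR k).
  by rewrite -ln_1; apply: ln_le_ln; [lra | apply: (le_INR 1); apply/leP].
have : INR #|hball s r| * exp ((INR n - r) * ln (INR k)) <= INR (k + 1) ^ n.
  rewrite -INR_expn -(sum_hamming_weight k s).
  apply: markov_card => t /[1!inE] /pboolP dist_le.
  rewrite INR_expn_exp // minus_INR; last first.
    by apply/leP; rewrite -[X in (_ <= X)%N]card_ord max_card.
  by apply: exp_le_exp; apply: Rmult_le_compat_r; lra.
have -> : INR (k + 1) ^ n = exp (INR n * ln (INR k + 1)).
  by rewrite -INR_expn INR_expn_exp ?addn1 // S_INR.
have := ln_add1_le k_pos; have := pos_INR n; have := exp_pos ((INR n - r) * ln (INR k)).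
move=> e_gt0 n_ge0 ln_le ball_le.
apply: (Rmult_le_reg_r _ _ _ e_gt0); rewrite -exp_plus; apply: Rle_trans ball_le _.
apply: exp_le_exp; have := Rmult_le_compat_l _ _ _ n_ge0 ln_le; rewrite /Rdiv; lra.
Qed.

Lemma clause_weight_le (n k : nat) (s : assignment n) :
  INR (\sum_(c : clause n k) 2 ^ clause_sat s c)
    <= INR #|{: clause n k}| * (2 * exp (- / (2 * 2 ^ k))).
Proof.
have := f_equal INR (sum_clause_weight k s).
rewrite plus_INR !mult_INR card_clause !INR_expn mult_INR Rpow_mult_distr /=.
replace (1 + 1) with 2 by lra.
have : 0 < 2 ^ k by apply: pow_lt; lra.
have : 0 <= INR n ^ k by apply: pow_le; apply: pos_INR.
set W := INR (\sum_c _); set P := 2 ^ k; set C := INR n ^ k => C_ge0 P_gt0 weight_eq.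
have -> : W = C * P * 2 * (1 + - / (2 * P)).
  have -> : C * P * 2 * (1 + - / (2 * P)) = 2 * (C * P) - C by field; lra.
  lra.
rewrite -Rmult_assoc; apply: Rmult_le_compat_l; first nra.
exact: exp_ineq1_le.
Qed.

Lemma formula_weight_le (n k m : nat) (s : assignment n) :
  INR (\sum_(Phi : formula n k m) 2 ^ (m - num_unsat Phi s))
    <= INR #|{: formula n k m}| * exp (INR m * ln 2 - INR m / 2 ^ k / 2).
Proof.
have two_k_gt0 : 0 < 2 ^ k by apply: pow_lt; lra.
rewrite sum_formula_weight card_ffun card_ord !INR_expn.
apply: Rle_trans (_ : _ <= (INR #|{: clause n k}| * (2 * exp (- / (2 * 2 ^ k)))) ^ m) _.
  by apply: pow_incr; split; [apply: pos_INR | apply: clause_weight_le].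
rewrite !Rpow_mult_distr exp_pow -(Rpower_pow m 2); last lra.
rewrite /Rpower -exp_plus; apply: Rmult_le_compat_l.
  by apply: pow_le; apply: pos_INR.
by apply: exp_le_exp; right; field; lra.
Qed.

Lemma card_inT_le (n k m : nat) (s : assignment n) : (0 < n)%N ->
  INR #|[set Phi : formula n k m | pbool (inT Phi s)]|
    <= INR #|{: formula n k m}| * exp (- (INR m / 2 ^ k) * (/ 2 - ln 2 / 10)).
Proof.
move=> n_gt0; have n_pos : 0 < INR n by apply: lt_0_INR; apply/ltP.
have two_k_gt0 : 0 < 2 ^ k by apply: pow_lt; lra.
have ln2_gt0 : 0 < ln 2 by rewrite -ln_1; apply: ln_increasing; lra.
set mu := INR m / 2 ^ k; set e := exp ((INR m - mu / 10) * ln 2).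
have : INR #|[set Phi : formula n k m | pbool (inT Phi s)]| * e
         <= INR #|{: formula n k m}| * exp (INR m * ln 2 - mu / 2).
  apply: Rle_trans (formula_weight_le k m s).
  apply: markov_card => Phi /[1!inE] /pboolP.
  rewrite /inT /rho INR_expn_exp // minus_INR; last first.
    by apply/leP; rewrite -[X in (_ <= X)%N]card_ord max_card.
  replace (INR 2) with 2 by (simpl; lra).
  have -> : INR n * (INR m / (2 ^ k * INR n)) / 10 = mu / 10 by rewrite /mu; field; lra.
  by move=> unsat_le; apply: exp_le_exp; apply: Rmult_le_compat_r; lra.
have e_gt0 : 0 < e by apply: exp_pos.
move=> weighted_le; apply: (Rmult_le_reg_r _ _ _ e_gt0); apply: Rle_trans weighted_le _.
rewrite Rmult_assoc -exp_plus; apply: Rmult_le_compat_l; first by apply: pos_INR.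
by apply: exp_le_exp; right; rewrite /mu; field; lra.
Qed.

Definition Tset (n k m : nat) (Phi : formula n k m) : {set assignment n} :=
  [set s | pbool (inT Phi s)].

Lemma mist_region_card_le (n k m : nat) (Phi : formula n k m) M : greedy_mist Phi M ->
  (mist_region_card Phi M
     <= \sum_(mu in Tset Phi) #|hball mu (IZR (Int_part (10 * kappa k * INR n)))|)%N.
Proof.
case=> centres_inT _; apply: leq_trans (card_bigcup_le _ _); apply: subset_leq_card.
apply/subsetP => t /[1!inE] /pboolP [mu [muM [_ dist_le]]].
apply/bigcupP; exists mu; last by rewrite inE; apply/pboolP.
rewrite inE; apply/pboolP; have [i i_lt <-] := nthP (asg0 n) muM.
by case: (centres_inT i i_lt).
Qed.

Lemma prob_bad_event_le (n k m : nat) : (0 < n)%N -> (0 < k)%N ->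
  prob (@bad_event n k m) * exp (- 2 * INR n / INR k ^ 2)
    <= exp (- (INR m / 2 ^ k) * (/ 2 - ln 2 / 10))
       * exp (INR n / INR k + IZR (Int_part (10 * kappa k * INR n)) * ln (INR k)).
Proof.
move=> n_gt0 k_gt0.
set E := exp _; set Y := exp _; set B := exp _; set F := INR #|{: formula n k m}|.
have two_n_gt0 : 0 < 2 ^ n by apply: pow_lt; lra.
have [B_gt0 E_gt0] : 0 < B /\ 0 < E by split; apply: exp_pos.
have F_gt0 : 0 < F.
  by apply: lt_0_INR; apply/ltP; apply/card_gt0P; exists [ffun=> [ffun=> (Ordinal n_gt0, true)]].
have bad_Tset : forall Phi : formula n k m, bad_event Phi -> 2 ^ n * E / B <= INR #|Tset Phi|.
  move=> Phi [M [greedyM region_gt]].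
  have := le_INR _ _ (elimT leP (mist_region_card_le greedyM)).
  have := sum_le_card_mul (A := Tset Phi)
    (fun mu _ => card_hball_le mu (IZR (Int_part (10 * kappa k * INR n))) k_gt0).
  rewrite -/B -/E in region_gt * => sum_le region_le.
  apply: (Rmult_le_reg_r _ _ _ B_gt0).
  rewrite /Rdiv Rmult_assoc Rinv_l ?Rmult_1_r; lra.
have : INR #|[set Phi : formula n k m | pbool (bad_event Phi)]| * (2 ^ n * E / B)
         <= 2 ^ n * (F * Y).
  apply: Rle_trans (markov_card (f := fun Phi => #|Tset Phi|) _) _.
    by move=> Phi /[1!inE] /pboolP /bad_Tset.
  rewrite /Tset sum_card_set_swap.
  have := sum_le_card_mul (A := predT) (fun s _ => card_inT_le k m s n_gt0).
  move/Rle_trans; apply; rewrite -/F -/Y card_ffun card_bool card_ord INR_expn.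
  by replace (INR 2) with 2 by (simpl; lra); apply: Rle_refl.
rewrite /prob -/F; set a := INR _ => bad_le.
have scale_gt0 : 0 < 2 ^ n * F / B by apply: Rdiv_lt_0_compat; [apply: Rmult_lt_0_compat|].
apply: (Rmult_le_reg_r _ _ _ scale_gt0).
have -> : a / F * E * (2 ^ n * F / B) = a * (2 ^ n * E / B) by field; lra.
by have -> : Y * B * (2 ^ n * F / B) = 2 ^ n * (F * Y) by field; lra.
Qed.

Lemma ln2_le1 : ln 2 <= 1.
Proof. by rewrite -(ln_exp 1); apply: ln_le_ln; [lra | have := exp_ineq1_le 1; lra]. Qed.

Lemma mist_exponent_le (K l mu n r : R) : 2 <= K -> 1 <= l -> 0 <= n ->
  195 * (l ^ 2 / K * n) <= mu -> r <= 10 * (l / K) * n ->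
  - mu * (/ 2 - ln 2 / 10) + (n / K + r * l) <= - 2 * n / K ^ 2 - n / K.
Proof.
move=> K_ge2 l_ge1 n_ge0 mu_ge r_le.
have K_pos : 0 < K by lra.
have nK_ge0 : 0 <= n / K by apply: Rmult_le_pos; [|apply: Rlt_le; apply: Rinv_0_lt_compat].
set q := l ^ 2 / K * n in mu_ge *.
have q_ge : n / K <= q.
  have -> : q = l ^ 2 * (n / K) by rewrite /q; field; lra.
  by rewrite -[X in X <= _]Rmult_1_l; apply: Rmult_le_compat_r => //; nra.
have nK2_le : 2 * n / K ^ 2 <= n / K.
  have -> : 2 * n / K ^ 2 = n / K * (2 / K) by field; lra.
  have : 2 / K <= 1 by apply: (Rmult_le_reg_r K); [|rewrite /Rdiv Rmult_assoc Rinv_l]; lra.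
  nra.
have rl_le : r * l <= 10 * q.
  have -> : 10 * q = 10 * (l / K) * n * l by rewrite /q; field; lra.
  by apply: Rmult_le_compat_r; lra.
clearbody q.
have mu_term : 78 * q <= mu * (/ 2 - ln 2 / 10).
  have mu_ln2_le := Rmult_le_compat_l mu _ _ ltac:(lra) ln2_le1; lra.
lra.
Qed.

Theorem mainTheorem8 :
  exists k0 : nat, forall k : nat, (k0 <= k)%nat ->
  forall mseq : nat -> nat,
    (forall n : nat,
       INR (mseq n) >= 195 * 2 ^ k * (ln (INR k)) ^ 2 / INR k * INR n) ->
  exists c : R, c > 0 /\ exists n0 : nat, forall n : nat, (n0 <= n)%nat ->
    prob (fun Phi : formula n k (mseq n) => bad_event Phi) <= exp (- c * INR n).
Proof.
exists 3%N => k k_ge3 mseq m_ge.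
have K_ge3 : 3 <= INR k by have := le_INR 3 k (elimT leP k_ge3); rewrite /=; lra.
have lnk_ge1 : 1 <= ln (INR k).
  by rewrite -(ln_exp 1); apply: ln_le_ln; [apply: exp_pos | have := exp_le_3; lra].
exists (/ INR k); split; first by apply: Rinv_0_lt_compat; lra.
exists 1%N => n n_ge1.
have two_k_gt0 : 0 < 2 ^ k by apply: pow_lt; lra.
have E_gt0 := exp_pos (- 2 * INR n / INR k ^ 2).
apply: (Rmult_le_reg_r _ _ _ E_gt0); apply: Rle_trans (prob_bad_event_le _ n_ge1 _) _.
  exact: leq_trans k_ge3.
rewrite -!exp_plus; apply: exp_le_exp.
have mu_ge : 195 * (ln (INR k) ^ 2 / INR k * INR n) <= INR (mseq n) / 2 ^ k.
  apply: (Rmult_le_reg_r _ _ _ two_k_gt0); have := m_ge n.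
  have -> : INR (mseq n) / 2 ^ k * 2 ^ k = INR (mseq n) by field; lra.
  have -> : 195 * (ln (INR k) ^ 2 / INR k * INR n) * 2 ^ k
    = 195 * 2 ^ k * ln (INR k) ^ 2 / INR k * INR n by field; lra.
  lra.
have r_le : IZR (Int_part (10 * kappa k * INR n)) <= 10 * (ln (INR k) / INR k) * INR n.
  exact: (base_Int_part _).1.
have := mist_exponent_le (K := INR k) ltac:(lra) lnk_ge1 (pos_INR n) mu_ge r_le.
by rewrite (_ : - / INR k * INR n = - (INR n / INR k)); [lra | field; lra].
Qed.
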